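(* There exists a constant $c$ such that $\alpha_k(m)\le m^c$ for all $k,m\in\mathbf N$.
   Context: For $k,m\in\mathbf N=\{1,2,\dots\}$, $\alpha_k(m)$ is the number of $k$-tuples $(m_1,\dots,m_k)$ of integers $m_i\ge2$ with $m_1m_2\cdots m_k=m$. *)

From mathcomp Require Import all_boot.
From Stdlib Require Import Reals.

(* For m >= 1 every such m_i divides m, so m_i <= m; we therefore range the
   tuples over {ffun 'I_k -> 'I_(m.+1)} (values 0..m), which loses no tuple. *)
Definition alpha (k m : nat) : nat :=
  #|[set f : {ffun 'I_k -> 'I_(m.+1)} |
      [forall i, 2 <= nat_of_ord (f i)] && (\prod_(i < k) nat_of_ord (f i) == m)]|.

(* Splitting off the first factor j of a factorization of m leaves a factorization of
   m / j with one factor fewer, so inductively alpha_k(m) <= sum_(j >= 2) (m / j)^2 <= m^2,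
   the last step because sum_(j >= 2) 1/j^2 < 1.  Hence c = 2 works. *)
From Stdlib Require Import Reals.
From mathcomp Require Import all_boot zify.

Definition factorizations (k N m : nat) : {set {ffun 'I_k -> 'I_N}} :=
  [set f : {ffun 'I_k -> 'I_N} |
    [forall i, 2 <= nat_of_ord (f i)] && (\prod_(i < k) nat_of_ord (f i) == m)].

Lemma alpha_factorizations (k m : nat) : alpha k m = #|factorizations k m.+1 m|.
Proof. by []. Qed.

Lemma card_factorizations0 (N m : nat) : #|factorizations 0 N m| <= m ^ 2.
Proof.
case: m => [|m].
  rewrite leqn0 cards_eq0; apply/eqP/setP => f.
  by rewrite !inE big_ord0 andbF.
apply: leq_trans (subset_leq_card (subsetT _)) _.
by rewrite cardsT card_ffun [#|'I_0|](card_ord 0) muln_gt0.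
Qed.

Lemma card_factorizations_head (k N m : nat) (j : 'I_N) :
  #|[set f in factorizations k.+1 N m | f ord0 == j]|
    <= if 2 <= j then #|factorizations k N (m %/ j)| else 0.
Proof.
case: (leqP 2 j) => [j_ge2 | j_lt2]; last first.
  rewrite leqn0 cards_eq0; apply/eqP/setP => f; rewrite !inE.
  apply/negP => /andP[/andP[/forallP/(_ ord0) f0_ge2 _] /eqP f0j].
  by rewrite f0j leqNgt j_lt2 in f0_ge2.
pose tail (f : {ffun 'I_k.+1 -> 'I_N}) : {ffun 'I_k -> 'I_N} :=
  [ffun i => f (lift ord0 i)].
have tail_inj : {in [set f in factorizations k.+1 N m | f ord0 == j] &, injective tail}.
  move=> f1 f2; rewrite !inE => /andP[_ /eqP f1j] /andP[_ /eqP f2j] tail_eq.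
  apply/ffunP => i; case: (unliftP ord0 i) => [i'|] ->; last by rewrite f1j f2j.
  by have := congr1 (fun h : {ffun 'I_k -> 'I_N} => h i') tail_eq; rewrite !ffunE.
rewrite -(card_in_imset tail_inj); apply: subset_leq_card; apply/subsetP => g /imsetP[f].
rewrite !inE => /andP[/andP[/forallP f_ge2 /eqP prod_f] /eqP f0j] ->.
apply/andP; split; first by apply/forallP => i; rewrite ffunE.
have j_gt0 : 0 < j by apply: leq_trans j_ge2.
rewrite big_ord_recl f0j in prod_f.
by rewrite -prod_f mulKn //; apply/eqP/eq_bigr => i _; rewrite ffunE.
Qed.

(* Integer form of [sum_(j=2)^(n+1) 1/j^2 <= sum_(j=2)^(n+1) 1/(j(j-1)) = 1 - 1/(n+1)]. *)
Lemma sum_sqr_divn_partial (m n : nat) :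
  n.+1 * \sum_(j < n.+2 | 2 <= j) (m %/ j) ^ 2 <= n * m ^ 2.
Proof.
elim: n => [|n IHn]; first by rewrite big_mkcond !big_ord_recr big_ord0.
rewrite (big_mkcond _ (fun j : 'I_n.+3 => _)) big_ord_recr /= -big_mkcond /=.
set S := \sum_(j < n.+2 | 2 <= j) _ in IHn *.
have last_term : (m %/ n.+2) ^ 2 * (n.+1 * n.+2) <= m ^ 2.
  have := leq_divM m n.+2; rewrite -leq_sqr => divM_sqr.
  apply: leq_trans divM_sqr.
  by rewrite expnMn leq_mul2l -mulnn leq_mul2r ltnW ?orbT.
rewrite -(leq_pmul2l (ltn0Sn n.+1)).
have := leq_mul (leqnn n.+3) IHn; nia.
Qed.

Lemma sum_sqr_divn_le (m N : nat) : \sum_(j < N | 2 <= j) (m %/ j) ^ 2 <= m ^ 2.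
Proof.
case: N => [|[|n]]; first by rewrite big_ord0.
  by rewrite big_mkcond big_ord_recr big_ord0.
have := sum_sqr_divn_partial m n; nia.
Qed.

Lemma card_factorizations_le (k N m : nat) : #|factorizations k N m| <= m ^ 2.
Proof.
elim: k N m => [|k IHk] N m; first exact: card_factorizations0.
rewrite -sum1_card (partition_big (fun f : {ffun 'I_k.+1 -> 'I_N} => f ord0) predT) //=.
apply: leq_trans (sum_sqr_divn_le m N); rewrite [X in _ <= X]big_mkcond /=.
apply: leq_sum => j _; rewrite sum1dep_card.
apply: leq_trans (card_factorizations_head k N m j) _.
by case: ifP => // _; apply: IHk.
Qed.

Open Scope R_scope.

Theorem lemma4p3 :
  exists c : R, forall k m : nat, leq 1 k -> leq 1 m ->
    INR (alpha k m) <= Rpower (INR m) c.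
Proof.
exists (INR 2) => k m _ m_gt0.
rewrite Rpower_pow; last by apply: lt_0_INR; apply/ltP.
rewrite /= Rmult_1_r -mult_INR; apply/le_INR/leP.
by rewrite multE mulnn alpha_factorizations; apply: card_factorizations_le.
Qed.
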